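(* Let $\Gamma$ be a modular pattern. There is an integer $m$ such that whenever two ideal triangles $\tau_1,\tau_2$ of the modular tiling have combinatorial distance at least $m$, at most one geodesic of $\Gamma$ intersects both $\tau_1$ and $\tau_2$.
   Context: A modular pattern is a $PSL_2(\mathbb Z)$-invariant collection $\Gamma$ of complete geodesics in $\mathbf H^2$ with finitely many $PSL_2(\mathbb Z)$-orbits, each geodesic stabilized by an infinite-order subgroup of $PSL_2(\mathbb Z)$. The modular tiling $T$ is the $PSL_2(\mathbb Z)$-invariant tiling of $\mathbf H^2$ by ideal triangles generated by reflections in the sides of the ideal triangle with vertices $0,1,\infty$ (upper half-plane). The combinatorial distance between two ideal triangles of $T$ is the number of edges of $T$ crossed by the geodesic segment joining their centers. *)

From Stdlib Require Import Reals ZArith List.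
Open Scope R_scope.

Definition pt := (R * R)%type.
Definition region := pt -> Prop.

Definition inH (p : pt) : Prop := 0 < snd p.

Definition img (f : pt -> pt) (S : region) : region :=
  fun p => exists q, S q /\ p = f q.

Definition meets (S T : region) : Prop := exists p, S p /\ T p.

(** Complete geodesics of H^2: vertical half-lines and half-circles
    orthogonal to the real axis, with endpoints a < b. *)
Definition vgeod (a : R) : region :=
  fun p => inH p /\ fst p = a.
Definition cgeod (a b : R) : region :=
  fun p => inH p /\ (fst p - a) * (fst p - b) + snd p * snd p = 0.

Definition is_geodesic (S : region) : Prop :=
  (exists a, S = vgeod a) \/ (exists a b, a < b /\ S = cgeod a b).

(** SL_2(Z); PSL_2(Z) = SL_2(Z)/{±1}, acting by Moebius maps. *)
Record SL2Z := { ma : Z; mb : Z; mc : Z; md : Z;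
                 mdet : (ma * md - mb * mc = 1)%Z }.

Definition moeb (g : SL2Z) (p : pt) : pt :=
  let a := IZR (ma g) in let b := IZR (mb g) in
  let c := IZR (mc g) in let d := IZR (md g) in
  let x := fst p in let y := snd p in
  let D := (c * x + d) * (c * x + d) + (c * y) * (c * y) in
  (((a * x + b) * (c * x + d) + a * c * (y * y)) / D, y / D).

Definition psl_eq (g h : SL2Z) : Prop :=
  (ma g = ma h /\ mb g = mb h /\ mc g = mc h /\ md g = md h) \/
  (ma g = (- ma h)%Z /\ mb g = (- mb h)%Z /\ mc g = (- mc h)%Z /\ md g = (- md h)%Z).

Definition infinite_stabilizer (gam : region) : Prop :=
  ~ (exists l : list SL2Z,
       forall g, img (moeb g) gam = gam -> exists h, In h l /\ psl_eq g h).

Definition modular_pattern (Gam : region -> Prop) : Prop :=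
  (forall gam, Gam gam -> is_geodesic gam) /\
  (forall g gam, Gam gam -> Gam (img (moeb g) gam)) /\
  (exists L : list region, forall gam, Gam gam ->
       exists gam0 g, In gam0 L /\ gam = img (moeb g) gam0) /\
  (forall gam, Gam gam -> infinite_stabilizer gam).

(** The modular tiling: the base (closed) ideal triangle with vertices
    0, 1, oo, and the group generated by reflections in its sides. *)
Definition Delta0 : region :=
  fun p => inH p /\ 0 <= fst p <= 1 /\
           (fst p - /2) * (fst p - /2) + snd p * snd p >= /4.

Definition side1 : region := vgeod 0.
Definition side2 : region := vgeod 1.
Definition side3 : region := cgeod 0 1.

Inductive refl_gen := Ref1 | Ref2 | Ref3.

Definition refl (r : refl_gen) (p : pt) : pt :=
  let x := fst p in let y := snd p in
  match r with
  | Ref1 => (- x, y)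
  | Ref2 => (2 - x, y)
  | Ref3 => let q := (x - /2) * (x - /2) + y * y in
            (/2 + (x - /2) / (4 * q), y / (4 * q))
  end.

(** Elements of the reflection group, as words in the generators. *)
Fixpoint word_act (w : list refl_gen) (p : pt) : pt :=
  match w with
  | nil => p
  | r :: w' => refl r (word_act w' p)
  end.

Definition tile (w : list refl_gen) : region := img (word_act w) Delta0.
Definition center0 : pt := (/2, sqrt 3 / 2).
Definition tile_center (w : list refl_gen) : pt := word_act w center0.

Definition is_edge (e : region) : Prop :=
  exists w, e = img (word_act w) side1 \/ e = img (word_act w) side2 \/
            e = img (word_act w) side3.

(** Hyperbolic geodesic segment joining two points of H^2. *)
Definition hseg (p1 p2 : pt) : region :=
  fun p =>
    let x1 := fst p1 in let y1 := snd p1 in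
    let x2 := fst p2 in let y2 := snd p2 in
    inH p /\
    ((x1 = x2 /\ fst p = x1 /\ Rmin y1 y2 <= snd p <= Rmax y1 y2) \/
     (x1 <> x2 /\ exists t,
        (x1 - t) * (x1 - t) + y1 * y1 = (x2 - t) * (x2 - t) + y2 * y2 /\
        (fst p - t) * (fst p - t) + snd p * snd p
          = (x1 - t) * (x1 - t) + y1 * y1 /\
        Rmin x1 x2 <= fst p <= Rmax x1 x2)).

(** Combinatorial distance between two tiles is >= m : at least m distinct
    edges of T are crossed by the segment joining the centers. *)
Definition comb_dist_ge (w1 w2 : list refl_gen) (m : nat) : Prop :=
  exists l : list region,
    length l = m /\ NoDup l /\
    Forall (fun e => is_edge e /\ meets e (hseg (tile_center w1) (tile_center w2))) l.

(** The argument translates everything into integral binary quadratic forms.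
    A geodesic is the zero set [A |z|^2 + B Re z + C = 0] of a real form
    [A X^2 + B XY + C Y^2] of positive discriminant; PSL_2(Z) acts on forms by
    substitution.  A geodesic with infinite stabilizer is fixed by a hyperbolic
    element, so it is the zero set of an integral form whose discriminant
    [t^2 - 4] (t the trace, [|t| >= 3]) is not a square; finitely many orbits give
    a uniform bound [N] on these discriminants.  The edges of the tiling are the
    Farey geodesics joining [p1/q1] and [p2/q2] with [p1 q2 - q1 p2 = 1], and
    every tile lies on one side of each of them.  If an edge separates the
    centers of two tiles met by a pattern geodesic, the geodesic crosses the
    edge, so the form of the geodesic takes opposite signs at [(p1,q1)] and
    [(p2,q2)]: in the basis [(p1,q1),(p2,q2)] it becomes a form [(a,b,c)] with
    [ac < 0] and [b^2 - 4ac <= N], so all three coefficients are at most [N] in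
    absolute value.  Recording these coefficients for two geodesics gives a
    6-tuple in a finite box, and equal tuples for two crossed edges force the
    edges or the geodesics to coincide.  Hence, once the centers are separated
    by more edges than the box has points, only one pattern geodesic can meet
    both tiles. *)

From Stdlib Require Import Reals ZArith List.
From Stdlib Require Import Lra Lia Psatz Nsatz.
From Stdlib Require Import Classical FunctionalExtensionality PropExtensionality.
Open Scope R_scope.

(** * Real binary quadratic forms and their zero sets in H^2 *)

Record qform := QForm { qA : R; qB : R; qC : R }.

Definition qval (Q : qform) (x y : R) := qA Q * (x * x + y * y) + qB Q * x + qC Q.
Definition qvalp (Q : qform) (p : pt) := qval Q (fst p) (snd p).
Definition qzero (Q : qform) : region := fun p => inH p /\ qvalp Q p = 0.

(* The form [Q(aX + bY, cX + dY)]. *)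
Definition qsubst (Q : qform) (a b c d : R) : qform :=
  QForm (qA Q * a * a + qB Q * a * c + qC Q * c * c)
        (2 * qA Q * a * b + qB Q * (a * d + b * c) + 2 * qC Q * c * d)
        (qA Q * b * b + qB Q * b * d + qC Q * d * d).

Definition qdisc (Q : qform) := qB Q * qB Q - 4 * qA Q * qC Q.
Definition qscale (l : R) (Q : qform) := QForm (l * qA Q) (l * qB Q) (l * qC Q).

Lemma qform_ext (Q Q' : qform) : qA Q = qA Q' -> qB Q = qB Q' -> qC Q = qC Q' -> Q = Q'.
Proof. destruct Q, Q'; simpl; intros; subst; reflexivity. Qed.

Lemma qsubst_ext Q a b c d a' b' c' d' :
  a = a' -> b = b' -> c = c' -> d = d' -> qsubst Q a b c d = qsubst Q a' b' c' d'.
Proof. intros; subst; reflexivity. Qed.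

Lemma qsubst_comp Q a b c d a' b' c' d' :
  qsubst (qsubst Q a b c d) a' b' c' d'
  = qsubst Q (a*a' + b*c') (a*b' + b*d') (c*a' + d*c') (c*b' + d*d').
Proof. apply qform_ext; unfold qsubst; simpl; ring. Qed.

Lemma qsubst_id Q : qsubst Q 1 0 0 1 = Q.
Proof. apply qform_ext; unfold qsubst; simpl; ring. Qed.

Lemma qsubst_qscale l Q a b c d : qsubst (qscale l Q) a b c d = qscale l (qsubst Q a b c d).
Proof. apply qform_ext; unfold qsubst, qscale; simpl; ring. Qed.

Lemma qscale_qscale l l' Q : qscale l (qscale l' Q) = qscale (l * l') Q.
Proof. apply qform_ext; unfold qscale; simpl; ring. Qed.

Lemma qscale_1 Q : qscale 1 Q = Q.
Proof. apply qform_ext; unfold qscale; simpl; ring. Qed.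

Lemma qdisc_qsubst Q a b c d : qdisc (qsubst Q a b c d) = (a*d - b*c) * (a*d - b*c) * qdisc Q.
Proof. unfold qdisc, qsubst; simpl; ring. Qed.

Lemma qdisc_qscale l Q : qdisc (qscale l Q) = l * l * qdisc Q.
Proof. unfold qdisc, qscale; simpl; ring. Qed.

Lemma qvalp_qscale l Q p : qvalp (qscale l Q) p = l * qvalp Q p.
Proof. unfold qvalp, qval, qscale; simpl; ring. Qed.

Lemma qzero_qscale l Q p : l <> 0 -> (qzero (qscale l Q) p <-> qzero Q p).
Proof.
  intros Hl; unfold qzero; rewrite qvalp_qscale.
  split; intros [H1 H2]; split; auto.
  - apply Rmult_integral in H2 as [H2|H2]; [contradiction | exact H2].
  - rewrite H2; ring.
Qed.

(* The cross product of [Q] with the fixed-point form [(c, d - a, -b)] vanishes. *)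
Lemma qsubst_fixed_eqs Q a b c d : a*d - b*c = 1 -> qsubst Q a b c d = Q ->
  qA Q * (d - a) = qB Q * c /\ qA Q * b + qC Q * c = 0 /\ qB Q * b + qC Q * (d - a) = 0.
Proof.
  destruct Q as [A B C]; unfold qsubst; simpl; intros H E.
  injection E; intros E3 E2 E1; clear E.
  repeat split; nsatz.
Qed.

Lemma qform_proportional Q f1 f2 f3 : (f1 <> 0 \/ f2 <> 0 \/ f3 <> 0) ->
  qA Q * f2 = qB Q * f1 -> qA Q * (- f3) + qC Q * f1 = 0 -> qB Q * (- f3) + qC Q * f2 = 0 ->
  exists mu, Q = qscale mu (QForm f1 f2 f3).
Proof.
  destruct Q as [A B C]; simpl; intros Hn E1 E2 E3.
  destruct Hn as [H|[H|H]].
  - exists (A / f1); apply qform_ext; unfold qscale; simpl.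
    + field; auto.
    + apply (Rmult_eq_reg_r f1); auto. field_simplify; auto; nra.
    + apply (Rmult_eq_reg_r f1); auto. field_simplify; auto; nra.
  - exists (B / f2); apply qform_ext; unfold qscale; simpl.
    + apply (Rmult_eq_reg_r f2); auto. field_simplify; auto; nra.
    + field; auto.
    + apply (Rmult_eq_reg_r f2); auto. field_simplify; auto; nra.
  - exists (C / f3); apply qform_ext; unfold qscale; simpl.
    + apply (Rmult_eq_reg_r f3); auto. field_simplify; auto; nra.
    + apply (Rmult_eq_reg_r f3); auto. field_simplify; auto; nra.
    + field; auto.
Qed.

(** * The action of SL_2(Z) on forms *)

Lemma moebius_denom_pos a b c d x y : a*d - b*c = 1 -> 0 < y ->
  0 < (c*x + d) * (c*x + d) + (c*y) * (c*y).
Proof.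
  intros H Hy. destruct (Req_dec c 0) as [->|Hc].
  - assert (Hd : d <> 0) by (intros ->; lra).
    pose proof (Rsqr_pos_lt d Hd). unfold Rsqr in *. lra.
  - assert (0 < c*y*(c*y)).
    { apply Rsqr_pos_lt. intro E. apply Rmult_integral in E. lra. }
    pose proof (Rle_0_sqr (c*x + d)). unfold Rsqr in *. lra.
Qed.

(* [|g z|^2 = |a z + b|^2 / |c z + d|^2], written with the numerator of [Re (g z)]. *)
Lemma moebius_norm a b c d x y : a*d - b*c = 1 ->
  let D := (c*x + d) * (c*x + d) + (c*y) * (c*y) in
  let u := (a*x + b) * (c*x + d) + a*c*(y*y) in
  u * u + y * y = ((a*x + b) * (a*x + b) + (a*y) * (a*y)) * D.
Proof.
  intros H D u. transitivity (u * u + y * y * ((a*d - b*c) * (a*d - b*c))).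
  - rewrite H; ring.
  - unfold u, D; ring.
Qed.

Lemma qval_moebius Q a b c d x y : a*d - b*c = 1 -> 0 < y ->
  let D := (c*x + d) * (c*x + d) + (c*y) * (c*y) in
  D * qval Q (((a*x + b) * (c*x + d) + a*c*(y*y)) / D) (y / D) = qval (qsubst Q a b c d) x y.
Proof.
  intros H Hy D. assert (HD : D <> 0) by (apply Rgt_not_eq, (moebius_denom_pos a b c d); auto).
  pose proof (moebius_norm a b c d x y H) as E; simpl in E; fold D in E.
  set (u := (a*x + b) * (c*x + d) + a*c*(y*y)) in *.
  destruct Q as [A B C]; unfold qval, qsubst; simpl.
  replace (D * (A * (u / D * (u / D) + y / D * (y / D)) + B * (u / D) + C))
    with (A * ((u * u + y * y) / D) + B * u + C * D) by (field; auto).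
  rewrite E. unfold u, D. field. exact HD.
Qed.

Definition qact (Q : qform) (g : SL2Z) :=
  qsubst Q (IZR (ma g)) (IZR (mb g)) (IZR (mc g)) (IZR (md g)).

Lemma SL2Z_detR (g : SL2Z) : IZR (ma g) * IZR (md g) - IZR (mb g) * IZR (mc g) = 1.
Proof. rewrite <- !mult_IZR, <- minus_IZR, (mdet g). reflexivity. Qed.

Lemma qzero_moeb g Q p : inH p -> (qzero Q (moeb g p) <-> qzero (qact Q g) p).
Proof.
  destruct p as [x y]; unfold inH, qzero, qvalp, moeb, qact; simpl; intros Hy.
  pose proof (SL2Z_detR g) as Hd.
  set (a := IZR (ma g)) in *; set (b := IZR (mb g)) in *;
  set (c := IZR (mc g)) in *; set (d := IZR (md g)) in *.
  pose proof (moebius_denom_pos a b c d x y Hd Hy) as HD.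
  pose proof (qval_moebius Q a b c d x y Hd Hy) as HK; simpl in HK.
  split; intros [H1 H2]; split.
  - exact Hy.
  - rewrite <- HK, H2; ring.
  - apply Rdiv_lt_0_compat; auto.
  - rewrite <- HK in H2. apply Rmult_integral in H2 as [H2|H2]; [lra | exact H2].
Qed.

Lemma inH_of_inH_moeb g p : inH (moeb g p) -> inH p.
Proof.
  destruct p as [x y]; unfold inH, moeb; simpl. intro H.
  set (D := (IZR (mc g) * x + IZR (md g)) * (IZR (mc g) * x + IZR (md g))
            + IZR (mc g) * y * (IZR (mc g) * y)) in *.
  assert (0 <= D) by (unfold D; apply Rplus_le_le_0_compat; apply Rle_0_sqr).
  destruct (Rle_lt_dec y 0); auto. exfalso.
  destruct (Req_dec D 0) as [E|E].
  - rewrite E in H. unfold Rdiv in H. rewrite Rinv_0 in H. lra.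
  - assert (0 < / D) by (apply Rinv_0_lt_compat; lra). unfold Rdiv in H. nra.
Qed.

Lemma SL2Z_inv_det (g : SL2Z) : (md g * ma g - (- mb g) * (- mc g) = 1)%Z.
Proof. pose proof (mdet g). lia. Qed.

Definition SL2Z_inv (g : SL2Z) : SL2Z :=
  Build_SL2Z (md g) (- mb g) (- mc g) (ma g) (SL2Z_inv_det g).

Lemma qact_invK Q g : qact (qact Q (SL2Z_inv g)) g = Q.
Proof.
  unfold qact; rewrite qsubst_comp; simpl. pose proof (SL2Z_detR g).
  rewrite <- (qsubst_id Q) at 2. apply qsubst_ext; rewrite ?opp_IZR; lra.
Qed.

Lemma qdisc_qact Q g : qdisc (qact Q g) = qdisc Q.
Proof. unfold qact. rewrite qdisc_qsubst, SL2Z_detR. ring. Qed.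

Lemma qzero_moeb_image g Q gam : (forall p, gam p -> qzero Q p) ->
  forall p, img (moeb g) gam p -> qzero (qact Q (SL2Z_inv g)) p.
Proof.
  intros Hgam p [q [Hq ->]]. specialize (Hgam q Hq).
  apply qzero_moeb; [apply Hgam |]. rewrite qact_invK. exact Hgam.
Qed.

(** * A zero set determines its form up to a scalar *)

(* On the zero set of [G] every form is affine in [x]: eliminate [|z|^2]. *)
Lemma qvalp_affine_on_qzero G F p : qzero G p ->
  qA G * qvalp F p = (qA G * qB F - qA F * qB G) * fst p + (qA G * qC F - qA F * qC G).
Proof.
  unfold qzero, qvalp, qval; intros [_ H].
  transitivity (qA G * (qA F * (fst p * fst p + snd p * snd p) + qB F * fst p + qC F)
              - qA F * (qA G * (fst p * fst p + snd p * snd p) + qB G * fst p + qC G)).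
  - rewrite H; ring.
  - ring.
Qed.

(* The zero set of [Q] with [qA Q <> 0] is the half-circle of center
   [- B / 2A] and squared radius [qdisc Q / 4A^2]. *)
Lemma qzero_circle_point Q t : qA Q <> 0 ->
  t * t < qdisc Q / (4 * qA Q * qA Q) ->
  exists y, qzero Q (- qB Q / (2 * qA Q) + t, y).
Proof.
  intros HA Ht. set (u := qdisc Q / (4 * qA Q * qA Q)) in *.
  exists (sqrt (u - t * t)). split.
  - apply sqrt_lt_R0; lra.
  - unfold qvalp, qval; simpl. rewrite sqrt_sqrt by lra.
    unfold u, qdisc. field. exact HA.
Qed.

Lemma qzero_incl_proportional_line Q Q' : qA Q = 0 -> qB Q <> 0 ->
  (forall p, qzero Q p -> qzero Q' p) -> exists l, Q' = qscale l Q.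
Proof.
  destruct Q as [A B C], Q' as [A' B' C']; unfold qzero, qvalp, qval, inH; simpl.
  intros -> HB Hincl. set (x0 := - C / B).
  assert (Hon : forall y, 0 < y -> 0 * (x0 * x0 + y * y) + B * x0 + C = 0)
    by (intros; unfold x0; field; exact HB).
  destruct (Hincl (x0, 1) (conj Rlt_0_1 (Hon 1 Rlt_0_1))) as [_ F1].
  destruct (Hincl (x0, 2) (conj Rlt_0_2 (Hon 2 Rlt_0_2))) as [_ F2]. simpl in F1, F2.
  assert (HA' : A' = 0) by lra. subst A'.
  exists (B' / B). apply qform_ext; unfold qscale; simpl.
  - ring.
  - field; exact HB.
  - replace C' with (- B' * x0) by lra. unfold x0. field; exact HB.
Qed.

Lemma qzero_incl_proportional_circle Q Q' : qA Q <> 0 -> 0 < qdisc Q ->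
  (forall p, qzero Q p -> qzero Q' p) -> exists l, Q' = qscale l Q.
Proof.
  intros HA HD Hincl. set (u := qdisc Q / (4 * qA Q * qA Q)).
  assert (Hu : 0 < u).
  { apply Rdiv_lt_0_compat; [exact HD|]. pose proof (Rsqr_pos_lt _ HA). unfold Rsqr in *. lra. }
  set (t := sqrt u / 2).
  assert (Ht : 0 < t) by (apply Rdiv_lt_0_compat; [apply sqrt_lt_R0|]; lra).
  assert (Htt : t * t < u).
  { replace (t * t) with (sqrt u * sqrt u / 4) by (unfold t; field).
    rewrite sqrt_sqrt; lra. }
  destruct (qzero_circle_point Q 0 HA ltac:(fold u; lra)) as [y0 H0].
  destruct (qzero_circle_point Q t HA Htt) as [y1 H1].
  pose proof (qvalp_affine_on_qzero Q Q' _ H0) as L0.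
  pose proof (qvalp_affine_on_qzero Q Q' _ H1) as L1.
  rewrite (proj2 (Hincl _ H0)) in L0. rewrite (proj2 (Hincl _ H1)) in L1. simpl in L0, L1.
  assert (EB : qA Q * qB Q' - qA Q' * qB Q = 0) by (apply (Rmult_eq_reg_r t); nra).
  assert (EC : qA Q * qC Q' - qA Q' * qC Q = 0) by (rewrite EB in L0; lra).
  exists (qA Q' / qA Q). apply qform_ext; unfold qscale; simpl.
  - field; exact HA.
  - apply (Rmult_eq_reg_l (qA Q)); [|exact HA]. field_simplify; [lra | exact HA].
  - apply (Rmult_eq_reg_l (qA Q)); [|exact HA]. field_simplify; [lra | exact HA].
Qed.

Lemma qzero_incl_proportional Q Q' : 0 < qdisc Q ->
  (forall p, qzero Q p -> qzero Q' p) -> exists l, Q' = qscale l Q.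
Proof.
  intros HD Hincl. destruct (Req_dec (qA Q) 0) as [HA|HA].
  - apply qzero_incl_proportional_line; auto.
    intros HB. unfold qdisc in HD. rewrite HA, HB in HD. lra.
  - apply qzero_incl_proportional_circle; auto.
Qed.

Lemma qzero_incl_qdisc_proportional Q Q' : 0 < qdisc Q -> qdisc Q' = qdisc Q ->
  (forall p, qzero Q p -> qzero Q' p) -> exists l, l * l = 1 /\ Q' = qscale l Q.
Proof.
  intros HD E Hincl. destruct (qzero_incl_proportional Q Q' HD Hincl) as [l ->].
  exists l; split; [|reflexivity].
  rewrite qdisc_qscale in E. apply (Rmult_eq_reg_r (qdisc Q)); lra.
Qed.

(** * Geodesics with infinite stabilizer are zero sets of irrational integral forms *)

Lemma geodesic_qzero gam : is_geodesic gam ->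
  exists Q, 0 < qdisc Q /\ forall p, gam p <-> qzero Q p.
Proof.
  intros [[a ->]|[a [b [Hab ->]]]].
  - exists (QForm 0 1 (- a)). split; [unfold qdisc; simpl; lra|].
    intros [x y]; unfold vgeod, qzero, qvalp, qval; simpl.
    split; intros [H1 H2]; split; auto; lra.
  - exists (QForm 1 (- (a + b)) (a * b)). split; [unfold qdisc; simpl; nra|].
    intros [x y]; unfold cgeod, qzero, qvalp, qval; simpl.
    split; intros [H1 H2]; split; auto; lra.
Qed.

Lemma SL2Z_mul_det (g h : SL2Z) :
  ((ma g * ma h + mb g * mc h) * (mc g * mb h + md g * md h)
   - (ma g * mb h + mb g * md h) * (mc g * ma h + md g * mc h) = 1)%Z.
Proof.
  transitivity ((ma g * md g - mb g * mc g) * (ma h * md h - mb h * mc h))%Z; [ring|].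
  rewrite (mdet g), (mdet h). reflexivity.
Qed.

Definition SL2Z_mul (g h : SL2Z) : SL2Z :=
  Build_SL2Z (ma g * ma h + mb g * mc h) (ma g * mb h + mb g * md h)
             (mc g * ma h + md g * mc h) (mc g * mb h + md g * md h) (SL2Z_mul_det g h).

Lemma qact_mul Q g h : qact (qact Q g) h = qact Q (SL2Z_mul g h).
Proof.
  unfold qact; rewrite qsubst_comp. simpl.
  apply qsubst_ext; rewrite ?plus_IZR, ?mult_IZR; reflexivity.
Qed.

Lemma SL2Z_mul_invK g h : let k := SL2Z_mul (SL2Z_inv g) h in
  (ma g * ma k + mb g * mc k = ma h /\ ma g * mb k + mb g * md k = mb h /\
   mc g * ma k + md g * mc k = mc h /\ mc g * mb k + md g * md k = md h)%Z.
Proof.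
  intros k; unfold k; simpl. pose proof (mdet g) as Hg.
  repeat split; [ transitivity (ma h * (ma g * md g - mb g * mc g))%Z
                | transitivity (mb h * (ma g * md g - mb g * mc g))%Z
                | transitivity (mc h * (ma g * md g - mb g * mc g))%Z
                | transitivity (md h * (ma g * md g - mb g * mc g))%Z ];
    try ring; rewrite Hg; ring.
Qed.

Lemma psl_eq_of_mul_inv_scalar g h : let k := SL2Z_mul (SL2Z_inv g) h in
  mb k = 0%Z -> mc k = 0%Z -> ma k = md k -> psl_eq h g.
Proof.
  intros k Hb Hc Had. pose proof (mdet k) as Hk.
  destruct (SL2Z_mul_invK g h) as [E1 [E2 [E3 E4]]]; fold k in E1, E2, E3, E4.
  rewrite Hb, Hc, <- Had in *.
  assert (Hs : (ma k = 1 \/ ma k = -1)%Z) by nia.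
  unfold psl_eq. destruct Hs as [Hs|Hs]; rewrite Hs in *; [left|right]; lia.
Qed.

Definition qformZ (A B C : Z) := QForm (IZR A) (IZR B) (IZR C).
Definition qdiscZ (A B C : Z) := (B * B - 4 * A * C)%Z.
Definition nonsquare (D : Z) := forall s, (s * s <> D)%Z.

Definition irrational_form (gam : region) (A B C : Z) :=
  (forall p, gam p <-> qzero (qformZ A B C) p) /\
  (0 < qdiscZ A B C)%Z /\ nonsquare (qdiscZ A B C).

Lemma qdisc_qformZ A B C : qdisc (qformZ A B C) = IZR (qdiscZ A B C).
Proof. unfold qdisc, qformZ, qdiscZ; cbn [qA qB qC]. rewrite minus_IZR, !mult_IZR. reflexivity. Qed.

Lemma irrational_form_qdisc_pos gam A B C : irrational_form gam A B C -> 0 < qdisc (qformZ A B C).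
Proof. intros [_ [H _]]. rewrite qdisc_qformZ. apply IZR_lt, H. Qed.

Lemma trace_disc_nonsquare t : (3 <= Z.abs t)%Z -> nonsquare (t * t - 4).
Proof.
  intros Ht s E.
  assert (Hs : (Z.abs s * Z.abs s = Z.abs t * Z.abs t - 4)%Z)
    by (rewrite <- !Z.abs_mul, !Z.abs_eq; nia).
  pose proof (Z.abs_nonneg s).
  destruct (Z_lt_le_dec (Z.abs s) (Z.abs t)); nia.
Qed.

(* A hyperbolic automorph [g] of [Q] determines [Q] up to a scalar as the
   fixed-point form [c X^2 + (d - a) XY - b Y^2] of discriminant [tr(g)^2 - 4]. *)
Lemma automorph_irrational_form gam Q g : (forall p, gam p <-> qzero Q p) -> 0 < qdisc Q ->
  qact Q g = Q -> ~ (mb g = 0 /\ mc g = 0 /\ ma g = md g)%Z ->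
  irrational_form gam (mc g) (md g - ma g) (- mb g).
Proof.
  intros Hgam HD Hfix Hnt. pose proof (mdet g) as Hdet.
  destruct (qsubst_fixed_eqs Q _ _ _ _ (SL2Z_detR g) Hfix) as [E1 [E2 E3]].
  assert (Hnz : IZR (mc g) <> 0 \/ IZR (md g) - IZR (ma g) <> 0 \/ IZR (- mb g) <> 0).
  { apply NNPP; intro Hn. apply Hnt. rewrite opp_IZR in Hn.
    apply not_or_and in Hn as [Hc Hn]. apply not_or_and in Hn as [Hda Hb].
    apply NNPP in Hc, Hda, Hb.
    repeat split; apply eq_IZR; lra. }
  destruct (qform_proportional Q _ _ _ Hnz) as [mu Hmu]; rewrite ?opp_IZR; [lra|lra|lra|].
  assert (Hmu0 : mu <> 0) by (intros E; rewrite Hmu, E, qdisc_qscale in HD; lra).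
  assert (Hform : forall p, gam p <-> qzero (qformZ (mc g) (md g - ma g) (- mb g)) p).
  { intro p. rewrite Hgam, Hmu, qzero_qscale by exact Hmu0.
    unfold qformZ. rewrite minus_IZR, opp_IZR. reflexivity. }
  assert (Htr : qdiscZ (mc g) (md g - ma g) (- mb g) = ((ma g + md g) * (ma g + md g) - 4)%Z)
    by (unfold qdiscZ; lia).
  assert (Hpos : (0 < qdiscZ (mc g) (md g - ma g) (- mb g))%Z).
  { apply lt_IZR. rewrite <- qdisc_qformZ. unfold qformZ. rewrite minus_IZR.
    rewrite Hmu, qdisc_qscale in HD. pose proof (Rsqr_pos_lt mu Hmu0). unfold Rsqr in *.
    apply (Rmult_lt_reg_l (mu * mu)); lra. }
  split; [exact Hform | split; [exact Hpos|]].
  rewrite Htr. apply trace_disc_nonsquare. rewrite Htr in Hpos. nia.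
Qed.

Lemma qact_qscale l Q g : qact (qscale l Q) g = qscale l (qact Q g).
Proof. apply qsubst_qscale. Qed.

Lemma stabilizer_qact_sign gam Q h : (forall p, gam p <-> qzero Q p) -> 0 < qdisc Q ->
  img (moeb h) gam = gam -> exists l, l * l = 1 /\ qact Q (SL2Z_inv h) = qscale l Q.
Proof.
  intros Hgam HD Hstab. apply qzero_incl_qdisc_proportional; [exact HD | apply qdisc_qact |].
  intros p Hp. apply (qzero_moeb_image h Q gam); [intros q; apply Hgam|].
  rewrite Hstab. apply Hgam, Hp.
Qed.

Lemma stabilizers_automorph Q h1 h2 l : l * l = 1 ->
  qact Q (SL2Z_inv h1) = qscale l Q -> qact Q (SL2Z_inv h2) = qscale l Q ->
  qact Q (SL2Z_mul (SL2Z_inv h1) h2) = Q.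
Proof.
  intros Hl E1 E2.
  assert (E2' : qact Q h2 = qscale l Q).
  { assert (E : qscale l (qact Q h2) = Q) by (rewrite <- qact_qscale, <- E2; apply qact_invK).
    rewrite <- E at 2. rewrite qscale_qscale, Hl. symmetry; apply qscale_1. }
  rewrite <- qact_mul, E1, qact_qscale, E2', qscale_qscale, Hl. apply qscale_1.
Qed.

Lemma infinite_stabilizer_avoid gam : infinite_stabilizer gam ->
  forall l, exists g, img (moeb g) gam = gam /\ forall h, In h l -> ~ psl_eq g h.
Proof.
  intros Hinf l. apply NNPP. intro Hn. apply Hinf. exists l. intros g Hg.
  apply NNPP. intro Hn2. apply Hn. exists g. split; auto.
  intros h Hh Hp. apply Hn2. exists h; auto.
Qed.

Lemma stabilized_geodesic_irrational_form gam : is_geodesic gam -> infinite_stabilizer gam ->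
  exists A B C, irrational_form gam A B C.
Proof.
  intros Hgeo Hinf. destruct (geodesic_qzero gam Hgeo) as [Q [HD Hgam]].
  assert (Hpair : forall h1 h2 l, img (moeb h1) gam = gam -> img (moeb h2) gam = gam ->
            ~ psl_eq h2 h1 -> l * l = 1 ->
            qact Q (SL2Z_inv h1) = qscale l Q -> qact Q (SL2Z_inv h2) = qscale l Q ->
            exists A B C, irrational_form gam A B C).
  { intros h1 h2 l _ _ Hne Hl E1 E2. eexists _, _, _.
    apply (automorph_irrational_form gam Q _ Hgam HD (stabilizers_automorph Q h1 h2 l Hl E1 E2)).
    intros [Hb [Hc Had]]. apply Hne. apply psl_eq_of_mul_inv_scalar; assumption. }
  destruct (infinite_stabilizer_avoid gam Hinf nil) as [h1 [S1 _]].
  destruct (infinite_stabilizer_avoid gam Hinf (h1 :: nil)) as [h2 [S2 N2]].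
  destruct (infinite_stabilizer_avoid gam Hinf (h1 :: h2 :: nil)) as [h3 [S3 N3]].
  destruct (stabilizer_qact_sign gam Q h1 Hgam HD S1) as [l1 [L1 E1]].
  destruct (stabilizer_qact_sign gam Q h2 Hgam HD S2) as [l2 [L2 E2]].
  destruct (stabilizer_qact_sign gam Q h3 Hgam HD S3) as [l3 [L3 E3]].
  (* all signs are [1] or [-1], so two of the three stabilizers act alike *)
  assert (Hsign : forall l, l * l = 1 -> l = 1 \/ l = -1) by (intros; nra).
  assert (l1 = l2 \/ l1 = l3 \/ l2 = l3) as [<-|[<-|<-]]
    by (destruct (Hsign l1 L1), (Hsign l2 L2), (Hsign l3 L3); lra).
  - apply (Hpair h1 h2 l1); simpl in N2; auto.
  - apply (Hpair h1 h3 l1); simpl in N3; auto.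
  - apply (Hpair h2 h3 l2); simpl in N3; auto.
Qed.

Lemma qact_qformZ A B C g : exists A' B' C', qact (qformZ A B C) g = qformZ A' B' C'.
Proof.
  exists (A * ma g * ma g + B * ma g * mc g + C * mc g * mc g)%Z,
    (2 * A * ma g * mb g + B * (ma g * md g + mb g * mc g) + 2 * C * mc g * md g)%Z,
    (A * mb g * mb g + B * mb g * md g + C * md g * md g)%Z.
  apply qform_ext; unfold qact, qsubst, qformZ; cbn [qA qB qC];
    repeat rewrite ?plus_IZR, ?mult_IZR; ring.
Qed.

Lemma moeb_image_irrational_form gam0 g g' gam gam' A B C :
  irrational_form gam A B C -> gam = img (moeb g) gam0 -> gam' = img (moeb g') gam0 ->
  is_geodesic gam' ->
  exists A' B' C', irrational_form gam' A' B' C' /\ qdiscZ A' B' C' = qdiscZ A B C.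
Proof.
  intros Hirr E E' Hgeo. set (F := qformZ A B C).
  assert (H0 : forall q, gam0 q -> qzero (qact F g) q).
  { intros q Hq. assert (Hm : qzero F (moeb g q)) by (apply (proj1 Hirr); rewrite E; exists q; auto).
    apply qzero_moeb; [apply (inH_of_inH_moeb g), Hm | exact Hm]. }
  set (F' := qact (qact F g) (SL2Z_inv g')).
  assert (HF' : qdisc F' = qdisc F) by (unfold F'; rewrite !qdisc_qact; reflexivity).
  destruct (geodesic_qzero gam' Hgeo) as [Q' [HD' Hgam']].
  destruct (qzero_incl_proportional Q' F' HD') as [l Hl].
  { intros p Hp. apply Hgam' in Hp. rewrite E' in Hp. revert p Hp.
    apply qzero_moeb_image, H0. }
  assert (Hl0 : l <> 0).
  { intros ->. pose proof (irrational_form_qdisc_pos _ _ _ _ Hirr).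
    rewrite Hl, qdisc_qscale in HF'. unfold F in HF'. lra. }
  destruct (qact_qformZ A B C g) as [A1 [B1 [C1 E1]]].
  destruct (qact_qformZ A1 B1 C1 (SL2Z_inv g')) as [A2 [B2 [C2 E2]]].
  assert (EF' : F' = qformZ A2 B2 C2) by (unfold F', F; rewrite E1; exact E2).
  assert (Hdisc : qdiscZ A2 B2 C2 = qdiscZ A B C)
    by (apply eq_IZR; rewrite <- !qdisc_qformZ, <- EF'; exact HF').
  exists A2, B2, C2. split; [|exact Hdisc].
  destruct Hirr as [_ Hd]. unfold irrational_form. rewrite Hdisc. split; [|exact Hd].
  intro p. rewrite Hgam', <- EF', Hl, qzero_qscale by exact Hl0. reflexivity.
Qed.

Lemma uniform_bound_list {X : Type} (P : X -> Z -> Prop) (L : list X) :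
  (forall x N N', P x N -> (N <= N')%Z -> P x N') ->
  (forall x, In x L -> exists N, P x N) -> exists N, forall x, In x L -> P x N.
Proof.
  intros Hmono. induction L as [|x L IH]; intros Hex.
  - exists 0%Z. intros x [].
  - destruct IH as [N HN]; [intros y Hy; apply Hex; right; exact Hy|].
    destruct (Hex x (or_introl eq_refl)) as [N0 H0].
    exists (Z.max N N0). intros y [<-|Hy].
    + apply (Hmono _ N0); [exact H0 | lia].
    + apply (Hmono _ N); [apply HN, Hy | lia].
Qed.

Lemma pattern_disc_bound Gam : modular_pattern Gam ->
  exists N : Z, forall gam, Gam gam ->
    exists A B C, irrational_form gam A B C /\ (qdiscZ A B C <= N)%Z.
Proof.
  intros [Hgeo [_ [[L HL] Hinf]]].
  set (P := fun gam0 N => forall g gam, Gam gam -> gam = img (moeb g) gam0 ->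
              exists A B C, irrational_form gam A B C /\ (qdiscZ A B C <= N)%Z).
  destruct (uniform_bound_list P L) as [N HN].
  - intros gam0 N N' H HNN' g gam Hg E.
    destruct (H g gam Hg E) as [A [B [C [Hirr Hle]]]]. exists A, B, C. split; [exact Hirr | lia].
  - intros gam0 _.
    destruct (classic (exists g gam, Gam gam /\ gam = img (moeb g) gam0)) as [[g [gam [Hg E]]]|Hn].
    + destruct (stabilized_geodesic_irrational_form gam (Hgeo _ Hg) (Hinf _ Hg)) as [A [B [C Hirr]]].
      exists (qdiscZ A B C). intros g' gam' Hg' E'.
      destruct (moeb_image_irrational_form gam0 g g' gam gam' A B C Hirr E E' (Hgeo _ Hg'))
        as [A' [B' [C' [Hirr' Hd]]]].
      exists A', B', C'. split; [exact Hirr' | lia].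
    + exists 0%Z. intros g gam Hg E. exfalso. apply Hn. exists g, gam. auto.
  - exists N. intros gam Hg. destruct (HL gam Hg) as [gam0 [g [Hin E]]].
    exact (HN gam0 Hin g gam Hg E).
Qed.

(** * Reflections, edges and tiles *)

(* [refl r] is the anti-Moebius map [z |-> (a conj(z) + b) / (c conj(z) + d)]
   of the determinant [-1] integer matrix below. *)
Definition refl_a r := match r with Ref1 => (-1)%Z | Ref2 => (-1)%Z | Ref3 => 1%Z end.
Definition refl_b r := match r with Ref1 => 0%Z | Ref2 => 2%Z | Ref3 => 0%Z end.
Definition refl_c r := match r with Ref1 => 0%Z | Ref2 => 0%Z | Ref3 => 2%Z end.
Definition refl_d r := match r with Ref1 => 1%Z | Ref2 => 1%Z | Ref3 => (-1)%Z end.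

Definition qrefl Q r :=
  qsubst Q (IZR (refl_a r)) (IZR (refl_b r)) (IZR (refl_c r)) (IZR (refl_d r)).

Lemma refl_det r : (refl_a r * refl_d r - refl_b r * refl_c r = -1)%Z.
Proof. destruct r; reflexivity. Qed.

Lemma inversion_denom_pos x y : 0 < y -> 0 < (x - /2) * (x - /2) + y * y.
Proof. intros Hy. pose proof (Rle_0_sqr (x - /2)). unfold Rsqr in *. nra. Qed.

Lemma inH_refl r p : inH p -> inH (refl r p).
Proof.
  destruct p as [x y]; unfold inH; simpl; intros Hy. destruct r; simpl; auto.
  pose proof (inversion_denom_pos x y Hy). apply Rdiv_lt_0_compat; lra.
Qed.

Lemma refl_involutive r p : inH p -> refl r (refl r p) = p.
Proof.
  destruct p as [x y]; unfold inH; simpl; intros Hy.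
  destruct r; simpl; [f_equal; ring | f_equal; ring |].
  pose proof (inversion_denom_pos x y Hy) as Hq.
  (* the inverted point [w] satisfies [|w - 1/2|^2 = 1 / (16 |z - 1/2|^2)] *)
  assert (Hinv : forall u q, q = u * u + y * y -> q <> 0 ->
            (/ 2 + u / (4 * q) - / 2) * (/ 2 + u / (4 * q) - / 2) + y / (4 * q) * (y / (4 * q))
            = / (16 * q)).
  { intros u q Eq Hq0. transitivity ((u * u + y * y) / (16 * q * q)); [field; exact Hq0|].
    rewrite <- Eq. field. exact Hq0. }
  rewrite (Hinv (x - /2) _ eq_refl) by lra.
  f_equal; field; lra.
Qed.

Lemma qvalp_refl r Q p : inH p ->
  exists den, 0 < den /\ den * qvalp Q (refl r p) = qvalp (qrefl Q r) p.
Proof.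
  destruct p as [x y]; unfold inH; simpl; intros Hy.
  destruct Q as [A B C]; destruct r; unfold qrefl, qvalp, qval, qsubst; simpl.
  - exists 1. split; [lra | ring].
  - exists 1. split; [lra | ring].
  - pose proof (inversion_denom_pos x y Hy) as Hq.
    exists (4 * ((x - /2) * (x - /2) + y * y)). split; [lra|]. field. lra.
Qed.

Lemma qzero_refl r Q p : inH p -> (qzero Q (refl r p) <-> qzero (qrefl Q r) p).
Proof.
  intros Hp. destruct (qvalp_refl r Q p Hp) as [den [Hd E]]. unfold qzero.
  split; intros [_ H].
  - split; [exact Hp|]. rewrite <- E, H. ring.
  - split; [apply inH_refl, Hp|]. rewrite <- E in H.
    apply Rmult_integral in H as [H|H]; [lra | exact H].
Qed.

Lemma qzero_img_refl r Q (S : region) : (forall p, S p <-> qzero Q p) ->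
  forall p, img (refl r) S p <-> qzero (qrefl Q r) p.
Proof.
  intros HS p. split.
  - intros [q [Hq ->]]. apply HS in Hq. pose proof (proj1 Hq) as HqH.
    apply (qzero_refl r Q (refl r q) (inH_refl r q HqH)).
    rewrite refl_involutive by exact HqH. exact Hq.
  - intros Hp. exists (refl r p). split.
    + apply HS, qzero_refl; [apply Hp | exact Hp].
    + symmetry. apply refl_involutive, Hp.
Qed.

Lemma img_word_act_cons r w (S : region) p :
  img (word_act (r :: w)) S p <-> img (refl r) (img (word_act w) S) p.
Proof.
  split.
  - intros [q [Hq ->]]. exists (word_act w q). split; [exists q; auto | reflexivity].
  - intros [q [[q' [Hq' ->]] ->]]. exists q'. auto.
Qed.

(* [(q1 X - p1 Y) (q2 X - p2 Y)], whose zero set is the geodesic joining [p1/q1] and [p2/q2]. *)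
Definition farey_form (p1 q1 p2 q2 : Z) := qformZ (q1 * q2) (- (p1 * q2 + q1 * p2)) (p1 * p2).
Definition unimodular (p1 q1 p2 q2 : Z) := (p1 * q2 - q1 * p2 = 1 \/ p1 * q2 - q1 * p2 = -1)%Z.

Lemma qvalp_farey_form p1 q1 p2 q2 p : qvalp (farey_form p1 q1 p2 q2) p =
  (IZR q1 * fst p - IZR p1) * (IZR q2 * fst p - IZR p2) + IZR q1 * IZR q2 * (snd p * snd p).
Proof.
  unfold qvalp, qval, farey_form, qformZ; cbn [qA qB qC].
  repeat rewrite ?opp_IZR, ?plus_IZR, ?mult_IZR. ring.
Qed.

Lemma qvalp_farey_form_swap p1 q1 p2 q2 p :
  qvalp (farey_form p2 q2 p1 q1) p = qvalp (farey_form p1 q1 p2 q2) p.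
Proof. rewrite !qvalp_farey_form. ring. Qed.

Lemma qvalp_farey_form_opp p1 q1 p2 q2 p :
  qvalp (farey_form (- p1) (- q1) p2 q2) p = - qvalp (farey_form p1 q1 p2 q2) p.
Proof. rewrite !qvalp_farey_form, !opp_IZR. ring. Qed.

Lemma qrefl_farey_form r p1 q1 p2 q2 : qrefl (farey_form p1 q1 p2 q2) r =
  farey_form (refl_a r * p1 + refl_b r * q1) (refl_c r * p1 + refl_d r * q1)
             (refl_a r * p2 + refl_b r * q2) (refl_c r * p2 + refl_d r * q2).
Proof.
  unfold qrefl, farey_form, qformZ, qsubst. apply qform_ext; cbn [qA qB qC];
    repeat rewrite ?plus_IZR, ?mult_IZR, ?opp_IZR; destruct r; simpl; ring.
Qed.

Lemma unimodular_refl r p1 q1 p2 q2 : unimodular p1 q1 p2 q2 ->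
  unimodular (refl_a r * p1 + refl_b r * q1) (refl_c r * p1 + refl_d r * q1)
             (refl_a r * p2 + refl_b r * q2) (refl_c r * p2 + refl_d r * q2).
Proof.
  unfold unimodular; intros Hd. pose proof (refl_det r) as Hr.
  replace ((refl_a r * p1 + refl_b r * q1) * (refl_c r * p2 + refl_d r * q2)
           - (refl_c r * p1 + refl_d r * q1) * (refl_a r * p2 + refl_b r * q2))%Z
    with ((refl_a r * refl_d r - refl_b r * refl_c r) * (p1 * q2 - q1 * p2))%Z by ring.
  rewrite Hr. lia.
Qed.

Lemma word_side_farey w (s : region) : (s = side1 \/ s = side2 \/ s = side3) ->
  exists p1 q1 p2 q2, unimodular p1 q1 p2 q2 /\
    forall p, img (word_act w) s p <-> qzero (farey_form p1 q1 p2 q2) p.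
Proof.
  intros Hs. induction w as [|r w IH].
  - assert (Hid : forall p, img (word_act nil) s p <-> s p)
      by (intros p; split; [intros [q [Hq ->]]; exact Hq | intros Hp; exists p; auto]).
    setoid_rewrite Hid.
    destruct Hs as [-> | [-> | ->]];
      [exists 0%Z, 1%Z, 1%Z, 0%Z | exists 1%Z, 1%Z, 1%Z, 0%Z | exists 0%Z, 1%Z, 1%Z, 1%Z];
      (split; [unfold unimodular; lia|]);
      intros [x y]; unfold side1, side2, side3, vgeod, cgeod, qzero;
      rewrite qvalp_farey_form; simpl; split; intros [H1 H2]; split; auto; lra.
  - destruct IH as [p1 [q1 [p2 [q2 [Hd IH]]]]].
    do 4 eexists. split; [apply (unimodular_refl r), Hd|].
    intros p. rewrite img_word_act_cons, <- qrefl_farey_form.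
    apply qzero_img_refl, IH.
Qed.

(** * Every tile lies on one side of every edge *)

Lemma center0_snd_sq : snd center0 * snd center0 = 3 / 4.
Proof.
  unfold center0; simpl. replace (sqrt 3 / 2 * (sqrt 3 / 2)) with (sqrt 3 * sqrt 3 / 4) by field.
  rewrite sqrt_sqrt; lra.
Qed.

Lemma inH_center0 : inH center0.
Proof. unfold inH, center0; simpl. apply Rdiv_lt_0_compat; [apply sqrt_lt_R0|]; lra. Qed.

Definition delta0_one_side (Q : qform) := exists s, (s = 1 \/ s = -1) /\
  (forall p, Delta0 p -> 0 <= s * qvalp Q p) /\ 0 < s * qvalp Q center0.

Lemma delta0_one_side_swap p1 q1 p2 q2 :
  delta0_one_side (farey_form p1 q1 p2 q2) -> delta0_one_side (farey_form p2 q2 p1 q1).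
Proof.
  intros [s [Hs [H1 H2]]]. exists s. setoid_rewrite qvalp_farey_form_swap. auto.
Qed.

Lemma delta0_one_side_opp p1 q1 p2 q2 :
  delta0_one_side (farey_form p1 q1 p2 q2) -> delta0_one_side (farey_form (- p1) (- q1) p2 q2).
Proof.
  intros [s [Hs [H1 H2]]]. exists (- s). setoid_rewrite qvalp_farey_form_opp.
  split; [lra|]. split; [intros p Hp; specialize (H1 p Hp)|]; lra.
Qed.

Lemma farey_vertical_one_side p1 p2 : (p1 = 1 \/ p1 = -1)%Z -> delta0_one_side (farey_form p1 0 p2 1).
Proof.
  intros Hp. pose proof center0_snd_sq as Hc.
  assert (Hk : forall p, qvalp (farey_form p1 0 p2 1) p = - IZR p1 * (fst p - IZR p2))
    by (intros; rewrite qvalp_farey_form; simpl; ring).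
  assert (Hp' : IZR p1 = 1 \/ IZR p1 = -1) by (destruct Hp as [-> | ->]; [left|right]; reflexivity).
  unfold delta0_one_side. setoid_rewrite Hk. unfold center0; simpl.
  destruct (Z_le_gt_dec p2 0) as [H|H].
  - apply IZR_le in H. exists (- IZR p1). split; [lra|].
    split; [intros [x y] [_ [Hx _]]; simpl in Hx |- *|]; destruct Hp' as [E|E]; rewrite E; lra.
  - assert (H1 : 1 <= IZR p2) by (apply IZR_le; lia). exists (IZR p1). split; [lra|].
    split; [intros [x y] [_ [Hx _]]; simpl in Hx |- *|]; destruct Hp' as [E|E]; rewrite E; lra.
Qed.

(* A Farey interval [[p1/q1, p2/q2]] has no integer in its interior. *)
Lemma farey_endpoints_position p1 q1 p2 q2 : (1 <= q1)%Z -> (1 <= q2)%Z -> unimodular p1 q1 p2 q2 ->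
  (p1 <= 0 /\ p2 <= 0 \/ q1 <= p1 /\ q2 <= p2 \/ 0 <= p1 <= q1 /\ 0 <= p2 <= q2)%Z.
Proof.
  unfold unimodular; intros Hq1 Hq2 Hd.
  destruct (Z_le_gt_dec p1 0), (Z_le_gt_dec p2 0), (Z_le_gt_dec q1 p1), (Z_le_gt_dec q2 p2);
    try lia; nia.
Qed.

(* On [Delta0], [y^2 >= x - x^2]; this makes the form nonnegative when both
   Farey endpoints lie in [[0,1]]. *)
Lemma farey_circle_one_side p1 q1 p2 q2 : (1 <= q1)%Z -> (1 <= q2)%Z -> unimodular p1 q1 p2 q2 ->
  delta0_one_side (farey_form p1 q1 p2 q2).
Proof.
  intros Hq1 Hq2 Hd. pose proof center0_snd_sq as Hc.
  destruct (farey_endpoints_position p1 q1 p2 q2 Hq1 Hq2 Hd)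
    as [[H1 H2]|[[H1 H2]|[[H1 H1'] [H2 H2']]]];
    exists 1; (split; [lra|]); setoid_rewrite qvalp_farey_form; unfold center0 in *; simpl in Hc |- *;
    apply IZR_le in Hq1, Hq2, H1, H2; try apply IZR_le in H1', H2';
    set (P1 := IZR p1) in *; set (P2 := IZR p2) in *; set (Q1 := IZR q1) in *; set (Q2 := IZR q2) in *;
    assert (HQ : 1 <= Q1 * Q2) by nra;
    (split; [intros [x y] [Hy [Hx Hxy]]; simpl in Hx, Hxy |- *;
             assert (Hyy : 0 <= Q1 * Q2 * (y * y)) by (apply Rmult_le_pos; [lra | apply Rle_0_sqr]) |]).
  - assert (0 <= (Q1 * x - P1) * (Q2 * x - P2)) by (apply Rmult_le_pos; nra). lra.
  - assert (0 < (Q1 * /2 - P1) * (Q2 * /2 - P2)) by (apply Rmult_lt_0_compat; nra). nra.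
  - assert (0 <= (P1 - Q1 * x) * (P2 - Q2 * x)) by (apply Rmult_le_pos; nra). nra.
  - assert (0 < (P1 - Q1 * /2) * (P2 - Q2 * /2)) by (apply Rmult_lt_0_compat; nra). nra.
  - assert (Hyy' : Q1 * Q2 * (y * y) >= Q1 * Q2 * (x - x * x))
      by (apply Rle_ge, Rmult_le_compat_l; nra).
    assert (0 <= x * ((Q1 - P1) * (Q2 - P2))) by (apply Rmult_le_pos; [lra | apply Rmult_le_pos; lra]).
    assert (0 <= (1 - x) * (P1 * P2)) by (apply Rmult_le_pos; [lra | apply Rmult_le_pos; lra]).
    nra.
  - assert (0 <= (Q1 - P1) * (Q2 - P2)) by (apply Rmult_le_pos; lra).
    assert (0 <= P1 * P2) by (apply Rmult_le_pos; lra). nra.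
Qed.

Lemma Zmul_unit_nonneg p q : (0 <= q)%Z -> (p * q = 1 \/ p * q = -1)%Z ->
  (q = 1 /\ (p = 1 \/ p = -1))%Z.
Proof.
  intros Hq H. destruct (Z.eq_dec q 0) as [->|Hq0]; [lia|].
  destruct (Z.eq_dec q 1) as [->|Hq1]; [lia|].
  destruct (Z_le_gt_dec p 0); [destruct (Z.eq_dec p 0); [subst; lia|]|]; nia.
Qed.

Lemma farey_form_delta0_one_side p1 q1 p2 q2 : unimodular p1 q1 p2 q2 ->
  delta0_one_side (farey_form p1 q1 p2 q2).
Proof.
  assert (Hnonneg : forall p1 q1 p2 q2, (0 <= q1)%Z -> (0 <= q2)%Z -> unimodular p1 q1 p2 q2 ->
            delta0_one_side (farey_form p1 q1 p2 q2)).
  { clear. unfold unimodular. intros p1 q1 p2 q2 H1 H2 Hd.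
    destruct (Z.eq_dec q1 0) as [->|E1]; [|destruct (Z.eq_dec q2 0) as [->|E2]].
    - destruct (Zmul_unit_nonneg p1 q2) as [-> Hp]; [lia | lia |].
      apply farey_vertical_one_side, Hp.
    - destruct (Zmul_unit_nonneg p2 q1) as [-> Hp]; [lia | lia |].
      apply delta0_one_side_swap, farey_vertical_one_side, Hp.
    - apply farey_circle_one_side; [lia | lia | unfold unimodular; lia]. }
  intros Hd. unfold unimodular in Hd.
  rewrite <- (Z.opp_involutive p1), <- (Z.opp_involutive q1),
          <- (Z.opp_involutive p2), <- (Z.opp_involutive q2).
  destruct (Z_le_gt_dec 0 q1), (Z_le_gt_dec 0 q2).
  - rewrite ?Z.opp_involutive. apply Hnonneg; auto.
  - apply delta0_one_side_swap, delta0_one_side_opp, delta0_one_side_swap.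
    rewrite ?Z.opp_involutive. apply Hnonneg; [lia | lia | unfold unimodular; lia].
  - apply delta0_one_side_opp.
    rewrite ?Z.opp_involutive. apply Hnonneg; [lia | lia | unfold unimodular; lia].
  - apply delta0_one_side_opp, delta0_one_side_swap, delta0_one_side_opp, delta0_one_side_swap.
    rewrite ?Z.opp_involutive. apply Hnonneg; [lia | lia | unfold unimodular; lia].
Qed.

Lemma inH_word_act w q : inH q -> inH (word_act w q).
Proof. induction w as [|r w IH]; simpl; auto. intros Hq. apply inH_refl, IH, Hq. Qed.

Lemma farey_form_tile_one_side w : forall p1 q1 p2 q2, unimodular p1 q1 p2 q2 ->
  forall q, Delta0 q ->
  0 <= qvalp (farey_form p1 q1 p2 q2) (word_act w q)
       * qvalp (farey_form p1 q1 p2 q2) (tile_center w) /\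
  qvalp (farey_form p1 q1 p2 q2) (tile_center w) <> 0.
Proof.
  unfold tile_center. induction w as [|r w IH]; intros p1 q1 p2 q2 Hd q Hq; simpl.
  - destruct (farey_form_delta0_one_side p1 q1 p2 q2 Hd) as [s [Hs [H1 H2]]].
    specialize (H1 q Hq). split; [destruct Hs as [-> | ->]; nra | intros E; rewrite E in H2; lra].
  - assert (HqH : inH (word_act w q)) by (apply inH_word_act, Hq).
    assert (HcH : inH (word_act w center0)) by (apply inH_word_act, inH_center0).
    destruct (qvalp_refl r (farey_form p1 q1 p2 q2) _ HqH) as [d1 [Hd1 K1]].
    destruct (qvalp_refl r (farey_form p1 q1 p2 q2) _ HcH) as [d2 [Hd2 K2]].
    rewrite qrefl_farey_form in K1, K2.
    destruct (IH _ _ _ _ (unimodular_refl r _ _ _ _ Hd) q Hq) as [I1 I2].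
    rewrite <- K1, <- K2 in I1. rewrite <- K2 in I2.
    set (u := qvalp (farey_form p1 q1 p2 q2) (refl r (word_act w q))) in *.
    set (v := qvalp (farey_form p1 q1 p2 q2) (refl r (word_act w center0))) in *.
    split.
    + assert (0 < d1 * d2) by (apply Rmult_lt_0_compat; auto).
      replace (d1 * u * (d2 * v)) with ((d1 * d2) * (u * v)) in I1 by ring.
      destruct (Rle_lt_dec 0 (u * v)); [assumption | nra].
    + intros E. apply I2. rewrite E. ring.
Qed.

(** * Crossing an edge *)

Lemma between_product_nonpos a b u : Rmin a b <= u <= Rmax a b -> (a - u) * (b - u) <= 0.
Proof.
  intros Hu. destruct (Rle_dec a b).
  - rewrite Rmin_left, Rmax_right in Hu by lra. nra.
  - rewrite Rmin_right, Rmax_left in Hu by lra. nra.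
Qed.

Lemma affine_values_opposite m s1 s2 s f1 f2 : f1 = m * (s1 - s) -> f2 = m * (s2 - s) ->
  (s1 - s) * (s2 - s) <= 0 -> f1 <> 0 -> f2 <> 0 -> f1 * f2 < 0.
Proof.
  intros -> -> Hs H1 H2.
  assert (E : m * (s1 - s) * (m * (s2 - s)) = (m * m) * ((s1 - s) * (s2 - s))) by ring.
  assert (0 <= m * m) by apply Rle_0_sqr.
  assert (m * (s1 - s) * (m * (s2 - s)) <> 0) by (apply Rmult_integral_contrapositive; auto).
  rewrite E in *. assert ((m * m) * ((s1 - s) * (s2 - s)) <= 0) by nra. lra.
Qed.

(* Along a vertical segment every form is affine in [y^2], along a half-circle
   of center [t] it is affine in [x]. *)
Lemma hseg_crossing_sign Q c1 c2 p : inH c1 -> inH c2 -> hseg c1 c2 p -> qvalp Q p = 0 ->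
  qvalp Q c1 <> 0 -> qvalp Q c2 <> 0 -> qvalp Q c1 * qvalp Q c2 < 0.
Proof.
  destruct c1 as [x1 y1], c2 as [x2 y2], p as [x y], Q as [A B C].
  unfold inH, hseg, qvalp, qval; simpl.
  intros Hy1 Hy2 [Hy [[Ex [Ex' Hr]]|[Hne [t [E1 [E2 Hr]]]]]] Hp H1 H2; subst.
  unfold inH in Hy; simpl in Hy.
  - apply (affine_values_opposite A (y1 * y1) (y2 * y2) (y * y)); auto; try lra.
    assert (Hb := between_product_nonpos y1 y2 y Hr).
    replace ((y1 * y1 - y * y) * (y2 * y2 - y * y)) with ((y1 - y) * (y2 - y) * ((y1 + y) * (y2 + y)))
      by ring.
    assert (0 <= - ((y1 - y) * (y2 - y)) * ((y1 + y) * (y2 + y)))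
      by (apply Rmult_le_pos; [lra | apply Rmult_le_pos; lra]).
    lra.
  - set (R2 := (x1 - t) * (x1 - t) + y1 * y1) in *.
    assert (L : forall u v, (u - t) * (u - t) + v * v = R2 ->
              A * (u * u + v * v) + B * u + C = (2 * A * t + B) * u + (A * (R2 - t * t) + C))
      by (intros u v Huv; replace (u * u + v * v) with (R2 - t * t + 2 * t * u) by lra; ring).
    rewrite (L x y E2) in Hp. rewrite (L x1 y1 eq_refl) in H1 |- *.
    rewrite (L x2 y2 (eq_sym E1)) in H2 |- *.
    apply (affine_values_opposite (2 * A * t + B) x1 x2 x); auto; try lra.
    apply between_product_nonpos, Hr.
Qed.

Lemma convex_root l1 l2 : l1 * l2 <= 0 -> exists lam, 0 <= lam <= 1 /\ lam * l1 + (1 - lam) * l2 = 0.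
Proof.
  intros H. destruct (Req_dec l1 l2) as [<-|E].
  - exists 1. split; [lra | nra].
  - exists (l2 / (l2 - l1)). split; [|field; lra].
    destruct (Rlt_dec l1 l2) as [Hlt|Hlt].
    + assert (l1 <= 0 <= l2) by nra. split.
      * unfold Rdiv. apply Rmult_le_pos; [lra | left; apply Rinv_0_lt_compat; lra].
      * apply Rmult_le_reg_r with (l2 - l1); [lra|]. unfold Rdiv; rewrite Rmult_assoc, Rinv_l; lra.
    + assert (l2 <= 0 <= l1) by nra.
      replace (l2 / (l2 - l1)) with ((- l2) / (l1 - l2)) by (field; lra). split.
      * unfold Rdiv. apply Rmult_le_pos; [lra | left; apply Rinv_0_lt_compat; lra].
      * apply Rmult_le_reg_r with (l1 - l2); [lra|]. unfold Rdiv; rewrite Rmult_assoc, Rinv_l; lra.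
Qed.

(* [A (A x^2 + B x + C) = - A^2 y^2 < 0] at both points, and this quantity is
   convex in [x]. *)
Lemma qzero_circle_between G P1 P2 lam : qA G <> 0 -> qzero G P1 -> qzero G P2 -> 0 <= lam <= 1 ->
  exists y0, qzero G (lam * fst P1 + (1 - lam) * fst P2, y0).
Proof.
  destruct G as [A B C], P1 as [x1 y1], P2 as [x2 y2].
  unfold qzero, qvalp, qval, inH; simpl. intros HA [Hy1 G1] [Hy2 G2] Hlam.
  set (x0 := lam * x1 + (1 - lam) * x2). set (f := fun x => A * x * x + B * x + C).
  assert (HAA : 0 < A * A) by (apply Rsqr_pos_lt; exact HA).
  assert (Fon : forall x y, A * (x * x + y * y) + B * x + C = 0 -> A * f x = - (A * A) * (y * y)).
  { intros x y Hxy. transitivity (A * (A * (x * x + y * y) + B * x + C) - A * A * (y * y));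
      [unfold f; ring | rewrite Hxy; ring]. }
  pose proof (Fon _ _ G1) as F1. pose proof (Fon _ _ G2) as F2.
  assert (Fc : A * f x0 = lam * (A * f x1) + (1 - lam) * (A * f x2)
                          - lam * (1 - lam) * (A * A) * ((x1 - x2) * (x1 - x2)))
    by (unfold f, x0; ring).
  assert (Hneg : A * f x0 < 0).
  { assert (Ha : 0 < (A * A) * (y1 * y1)) by (apply Rmult_lt_0_compat; nra).
    assert (Hb : 0 < (A * A) * (y2 * y2)) by (apply Rmult_lt_0_compat; nra).
    assert (0 <= lam * (1 - lam) * (A * A) * ((x1 - x2) * (x1 - x2))).
    { apply Rmult_le_pos; [|apply Rle_0_sqr]. apply Rmult_le_pos; [|lra]. apply Rmult_le_pos; lra. }
    assert (Hconv : forall a b, 0 < a -> 0 < b -> 0 < lam * a + (1 - lam) * b) by (intros; nra).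
    specialize (Hconv _ _ Ha Hb).
    rewrite Fc, F1, F2. lra. }
  assert (Hpos : 0 < - f x0 / A).
  { replace (- f x0 / A) with (- (A * f x0) / (A * A)) by (field; exact HA).
    apply Rdiv_lt_0_compat; lra. }
  exists (sqrt (- f x0 / A)). split; [apply sqrt_lt_R0, Hpos|].
  replace (A * (x0 * x0 + sqrt (- f x0 / A) * sqrt (- f x0 / A)) + B * x0 + C)
    with (f x0 + A * (sqrt (- f x0 / A) * sqrt (- f x0 / A))) by (unfold f; ring).
  rewrite sqrt_sqrt by lra. field. exact HA.
Qed.

Lemma qzero_crossing G F P1 P2 : qA G <> 0 -> qzero G P1 -> qzero G P2 ->
  qvalp F P1 * qvalp F P2 <= 0 -> exists P, qzero G P /\ qvalp F P = 0.
Proof.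
  intros HA H1 H2 Hs.
  set (l := fun x => (qA G * qB F - qA F * qB G) * x + (qA G * qC F - qA F * qC G)).
  assert (Hl : forall P, qzero G P -> qA G * qvalp F P = l (fst P))
    by (intros P HP; apply qvalp_affine_on_qzero, HP).
  assert (Hll : l (fst P1) * l (fst P2) <= 0).
  { rewrite <- (Hl _ H1), <- (Hl _ H2).
    replace (qA G * qvalp F P1 * (qA G * qvalp F P2))
      with ((qA G * qA G) * (qvalp F P1 * qvalp F P2)) by ring.
    pose proof (Rle_0_sqr (qA G)). unfold Rsqr in *. nra. }
  destruct (convex_root _ _ Hll) as [lam [Hlam Hz]].
  destruct (qzero_circle_between G P1 P2 lam HA H1 H2 Hlam) as [y0 HP].
  exists (lam * fst P1 + (1 - lam) * fst P2, y0). split; [exact HP|].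
  apply (Rmult_eq_reg_l (qA G)); [|exact HA].
  rewrite Hl by exact HP. rewrite Rmult_0_r, <- Hz. unfold l; simpl. ring.
Qed.

Definition qbin (Q : qform) (p q : R) := qA Q * p * p + qB Q * p * q + qC Q * q * q.

Definition farey_weight (p q : R) (z : pt) :=
  (q * fst z - p) * (q * fst z - p) + q * q * (snd z * snd z).

Lemma farey_weight_pos p q z : inH z -> (p <> 0 \/ q <> 0) -> 0 < farey_weight p q z.
Proof.
  unfold inH, farey_weight; intros Hy Hpq.
  assert (Hyy : 0 < snd z * snd z) by (apply Rmult_lt_0_compat; exact Hy).
  pose proof (Rle_0_sqr (q * fst z - p)). unfold Rsqr in *.
  destruct (Req_dec q 0) as [->|Hq].
  - destruct Hpq as [Hp|Hq]; [|contradiction].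
    pose proof (Rsqr_pos_lt p Hp). unfold Rsqr in *. nra.
  - pose proof (Rsqr_pos_lt q Hq). unfold Rsqr in *.
    assert (0 < q * q * (snd z * snd z)) by (apply Rmult_lt_0_compat; lra). lra.
Qed.

(* The cross term is a multiple of the Farey form of [(p1,q1), (p2,q2)]. *)
Lemma qvalp_farey_expansion G p1 q1 p2 q2 z :
  (p1 * q2 - q1 * p2) * (p1 * q2 - q1 * p2) * qvalp G z =
  farey_weight p2 q2 z * qbin G p1 q1 + farey_weight p1 q1 z * qbin G p2 q2
  - 2 * ((q1 * fst z - p1) * (q2 * fst z - p2) + q1 * q2 * (snd z * snd z))
      * (qA G * p1 * p2 + qB G / 2 * (p1 * q2 + q1 * p2) + qC G * q1 * q2).
Proof. unfold qvalp, qval, farey_weight, qbin. field. Qed.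

(* At a common zero the expansion reads [w2 g1 + w1 g2 = 0] with positive weights. *)
Lemma qbin_farey_crossing_sign G p1 q1 p2 q2 z : unimodular p1 q1 p2 q2 -> qzero G z ->
  qvalp (farey_form p1 q1 p2 q2) z = 0 ->
  qbin G (IZR p1) (IZR q1) * qbin G (IZR p2) (IZR q2) <= 0.
Proof.
  intros Hd [Hz HG] HF. rewrite qvalp_farey_form in HF.
  assert (Hdet : (IZR p1 * IZR q2 - IZR q1 * IZR p2) * (IZR p1 * IZR q2 - IZR q1 * IZR p2) = 1).
  { rewrite <- !mult_IZR, <- minus_IZR, <- mult_IZR.
    destruct Hd as [E|E]; rewrite E; reflexivity. }
  pose proof (qvalp_farey_expansion G (IZR p1) (IZR q1) (IZR p2) (IZR q2) z) as Hexp.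
  rewrite Hdet, HG, HF in Hexp.
  assert (Hv1 : IZR p1 <> 0 \/ IZR q1 <> 0).
  { destruct (Req_dec (IZR p1) 0) as [E|E]; [right | left; exact E].
    intros E'. rewrite E, E' in Hdet. lra. }
  assert (Hv2 : IZR p2 <> 0 \/ IZR q2 <> 0).
  { destruct (Req_dec (IZR p2) 0) as [E|E]; [right | left; exact E].
    intros E'. rewrite E, E' in Hdet. lra. }
  pose proof (farey_weight_pos _ _ z Hz Hv1) as W1. pose proof (farey_weight_pos _ _ z Hz Hv2) as W2.
  set (g1 := qbin G (IZR p1) (IZR q1)) in *. set (g2 := qbin G (IZR p2) (IZR q2)) in *.
  set (w1 := farey_weight (IZR p1) (IZR q1) z) in *.
  set (w2 := farey_weight (IZR p2) (IZR q2) z) in *.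
  assert (Hw : w2 * (g1 * g2) = - w1 * (g2 * g2)).
  { replace (w2 * (g1 * g2)) with ((w2 * g1) * g2) by ring.
    replace (w2 * g1) with (- (w1 * g2)) by lra. ring. }
  assert (0 <= w1 * (g2 * g2)) by (apply Rmult_le_pos; [lra | apply Rle_0_sqr]).
  destruct (Rle_dec (g1 * g2) 0) as [Hle|Hgt]; [exact Hle|].
  assert (0 < w2 * (g1 * g2)) by (apply Rmult_lt_0_compat; lra). lra.
Qed.

(** * Counting crossed edges *)

Definition qbinZ (A B C p q : Z) := (A * p * p + B * p * q + C * q * q)%Z.
Definition qmidZ (A B C p1 q1 p2 q2 : Z) :=
  (2 * A * p1 * p2 + B * (p1 * q2 + p2 * q1) + 2 * C * q1 * q2)%Z.

(* The coefficients of [A X^2 + B XY + C Y^2] in the basis [(p1,q1), (p2,q2)]. *)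
Definition basis_coeffs (A B C p1 q1 p2 q2 : Z) : Z * Z * Z :=
  (qbinZ A B C p1 q1, qmidZ A B C p1 q1 p2 q2, qbinZ A B C p2 q2).

Lemma qsubst_qformZ A B C p1 q1 p2 q2 :
  qsubst (qformZ A B C) (IZR p1) (IZR p2) (IZR q1) (IZR q2) =
  qformZ (qbinZ A B C p1 q1) (qmidZ A B C p1 q1 p2 q2) (qbinZ A B C p2 q2).
Proof.
  unfold qformZ, qsubst, qbinZ, qmidZ. apply qform_ext; cbn [qA qB qC];
    repeat rewrite ?plus_IZR, ?mult_IZR; ring.
Qed.

Lemma qbin_qformZ A B C p q : qbin (qformZ A B C) (IZR p) (IZR q) = IZR (qbinZ A B C p q).
Proof. unfold qbin, qformZ, qbinZ; cbn [qA qB qC]. repeat rewrite ?plus_IZR, ?mult_IZR. ring. Qed.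

Lemma qdiscZ_basis_coeffs A B C p1 q1 p2 q2 :
  qdiscZ (qbinZ A B C p1 q1) (qmidZ A B C p1 q1 p2 q2) (qbinZ A B C p2 q2)
  = ((p1 * q2 - q1 * p2) * (p1 * q2 - q1 * p2) * qdiscZ A B C)%Z.
Proof. unfold qdiscZ, qmidZ, qbinZ. ring. Qed.

(* An irrational form does not represent zero. *)
Lemma irrational_form_qbinZ_nonzero gam A B C p1 q1 p2 q2 :
  irrational_form gam A B C -> unimodular p1 q1 p2 q2 ->
  qbinZ A B C p1 q1 <> 0%Z /\ qbinZ A B C p2 q2 <> 0%Z.
Proof.
  intros [_ [_ Hns]] Hd. pose proof (qdiscZ_basis_coeffs A B C p1 q1 p2 q2) as E.
  assert (Hd2 : ((p1 * q2 - q1 * p2) * (p1 * q2 - q1 * p2) = 1)%Z)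
    by (destruct Hd as [H|H]; rewrite H; reflexivity).
  rewrite Hd2, Z.mul_1_l in E. unfold qdiscZ in E.
  split; intros Z0; rewrite Z0 in E; apply (Hns (qmidZ A B C p1 q1 p2 q2)); unfold qdiscZ; lia.
Qed.

Lemma irrational_form_qA_nonzero gam A B C : irrational_form gam A B C -> qA (qformZ A B C) <> 0.
Proof.
  intros [_ [_ Hns]]. simpl. intros E. apply eq_IZR in E. subst A.
  apply (Hns B). unfold qdiscZ. lia.
Qed.

Lemma indefinite_coeff_bound a b c N : (qdiscZ a b c <= N)%Z -> (a * c < 0)%Z ->
  (- N <= a <= N /\ - N <= b <= N /\ - N <= c <= N)%Z.
Proof.
  unfold qdiscZ; intros HD Hac.
  assert (a <> 0)%Z by (intros ->; lia). assert (c <> 0)%Z by (intros ->; lia).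
  assert (- N <= b <= N)%Z by nia.
  destruct (Z.abs_spec a) as [[? ?]|[? ?]], (Z.abs_spec c) as [[? ?]|[? ?]]; repeat split; nia.
Qed.

(* Each tile lies on the side of its own center, and the edge separates the centers. *)
Lemma tile_points_opposite_sides w1 w2 p1 q1 p2 q2 z z1 z2 :
  unimodular p1 q1 p2 q2 -> qzero (farey_form p1 q1 p2 q2) z ->
  hseg (tile_center w1) (tile_center w2) z -> tile w1 z1 -> tile w2 z2 ->
  qvalp (farey_form p1 q1 p2 q2) z1 * qvalp (farey_form p1 q1 p2 q2) z2 <= 0.
Proof.
  intros Hd [_ Hz] Hseg [r1 [Hr1 ->]] [r2 [Hr2 ->]]. set (F := farey_form p1 q1 p2 q2).
  destruct (farey_form_tile_one_side w1 p1 q1 p2 q2 Hd r1 Hr1) as [S1 N1].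
  destruct (farey_form_tile_one_side w2 p1 q1 p2 q2 Hd r2 Hr2) as [S2 N2]. fold F in S1, N1, S2, N2.
  pose proof (hseg_crossing_sign F _ _ z (inH_word_act w1 _ inH_center0) (inH_word_act w2 _ inH_center0)
                Hseg Hz N1 N2) as Hc. fold (tile_center w1) (tile_center w2) in Hc.
  set (u1 := qvalp F (word_act w1 r1)) in *. set (u2 := qvalp F (word_act w2 r2)) in *.
  set (k1 := qvalp F (tile_center w1)) in *. set (k2 := qvalp F (tile_center w2)) in *.
  assert (E : (u1 * k1) * (u2 * k2) = (u1 * u2) * (k1 * k2)) by ring.
  assert (0 <= (u1 * k1) * (u2 * k2)) by (apply Rmult_le_pos; lra).
  destruct (Rle_dec (u1 * u2) 0) as [Hx|Hx]; [exact Hx|].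
  assert ((u1 * u2) * (k1 * k2) < 0) by (apply Rmult_pos_neg; lra). lra.
Qed.

Lemma crossed_edge_sign_change gam A B C w1 w2 e p1 q1 p2 q2 :
  irrational_form gam A B C -> unimodular p1 q1 p2 q2 ->
  (forall p, e p <-> qzero (farey_form p1 q1 p2 q2) p) ->
  meets e (hseg (tile_center w1) (tile_center w2)) ->
  meets gam (tile w1) -> meets gam (tile w2) ->
  (qbinZ A B C p1 q1 * qbinZ A B C p2 q2 < 0)%Z.
Proof.
  intros Hirr Hd He [z [Hze Hzs]] [z1 [Hg1 Ht1]] [z2 [Hg2 Ht2]].
  apply He in Hze. apply (proj1 Hirr) in Hg1, Hg2.
  pose proof (tile_points_opposite_sides w1 w2 p1 q1 p2 q2 z z1 z2 Hd Hze Hzs Ht1 Ht2) as Hopp.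
  destruct (qzero_crossing _ _ _ _ (irrational_form_qA_nonzero gam A B C Hirr) Hg1 Hg2 Hopp)
    as [P [HPg HPF]].
  pose proof (qbin_farey_crossing_sign _ p1 q1 p2 q2 P Hd HPg HPF) as Hb.
  rewrite !qbin_qformZ, <- mult_IZR in Hb. apply le_IZR in Hb.
  destruct (irrational_form_qbinZ_nonzero gam A B C p1 q1 p2 q2 Hirr Hd) as [Z1 Z2].
  assert (qbinZ A B C p1 q1 * qbinZ A B C p2 q2 <> 0)%Z by (intros E; apply Z.mul_eq_0 in E; tauto).
  lia.
Qed.

Lemma qsubst_eq_automorph G a b c d a' b' c' d' : a' * d' - b' * c' = 1 ->
  qsubst G a b c d = qsubst G a' b' c' d' ->
  qsubst G (a * d' - b * c') (- a * b' + b * a') (c * d' - d * c') (- c * b' + d * a') = G.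
Proof.
  intros Hd E. transitivity (qsubst (qsubst G a b c d) d' (- b') (- c') a').
  - rewrite qsubst_comp. apply qsubst_ext; ring.
  - rewrite E, qsubst_comp. rewrite <- (qsubst_id G) at 2. apply qsubst_ext; lra.
Qed.

(* A common non-scalar automorph pins both forms to its fixed-point form. *)
Lemma common_automorph_qzero_eq G1 G2 a b c d : 0 < qdisc G1 -> 0 < qdisc G2 -> a * d - b * c = 1 ->
  qsubst G1 a b c d = G1 -> qsubst G2 a b c d = G2 -> (c <> 0 \/ d - a <> 0 \/ - b <> 0) ->
  forall p, qzero G1 p <-> qzero G2 p.
Proof.
  intros HD1 HD2 Hdet E1 E2 Hn.
  destruct (qsubst_fixed_eqs G1 a b c d Hdet E1) as [x1 [x2 x3]].
  destruct (qsubst_fixed_eqs G2 a b c d Hdet E2) as [y1 [y2 y3]].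
  destruct (qform_proportional G1 c (d - a) (- b) Hn) as [m1 Hm1]; [lra | lra | lra |].
  destruct (qform_proportional G2 c (d - a) (- b) Hn) as [m2 Hm2]; [lra | lra | lra |].
  assert (m1 <> 0) by (intros Z; rewrite Hm1, Z, qdisc_qscale in HD1; lra).
  assert (m2 <> 0) by (intros Z; rewrite Hm2, Z, qdisc_qscale in HD2; lra).
  intro p. rewrite Hm1, Hm2, !qzero_qscale by assumption. reflexivity.
Qed.

Lemma qsubst_eq_qzero_eq_or_sign G1 G2 a b c d a' b' c' d' : 0 < qdisc G1 -> 0 < qdisc G2 ->
  a * d - b * c = 1 -> a' * d' - b' * c' = 1 ->
  qsubst G1 a b c d = qsubst G1 a' b' c' d' -> qsubst G2 a b c d = qsubst G2 a' b' c' d' ->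
  (forall p, qzero G1 p <-> qzero G2 p) \/
  (exists s, s * s = 1 /\ a = s * a' /\ b = s * b' /\ c = s * c' /\ d = s * d').
Proof.
  intros HD1 HD2 Hd Hd' E1 E2.
  set (ha := a * d' - b * c'). set (hb := - a * b' + b * a').
  set (hc := c * d' - d * c'). set (hd := - c * b' + d * a').
  assert (Hh : ha * hd - hb * hc = 1).
  { transitivity ((a * d - b * c) * (a' * d' - b' * c')); [unfold ha, hb, hc, hd; ring|].
    rewrite Hd, Hd'; ring. }
  destruct (classic (hc <> 0 \/ hd - ha <> 0 \/ - hb <> 0)) as [Hn|Hn].
  - left. apply (common_automorph_qzero_eq G1 G2 ha hb hc hd); auto;
      apply qsubst_eq_automorph; assumption.
  - right. apply not_or_and in Hn as [Hc Hn]. apply not_or_and in Hn as [Hda Hb].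
    apply NNPP in Hc, Hda, Hb.
    exists ha. split; [replace hb with 0 in Hh by lra; replace hd with ha in Hh by lra; lra|].
    (* [(a b; c d) = h (a' b'; c' d')] with [h = ha] scalar *)
    assert (Ea : ha * a' + hb * c' = a * (a' * d' - b' * c')) by (unfold ha, hb; ring).
    assert (Eb : ha * b' + hb * d' = b * (a' * d' - b' * c')) by (unfold ha, hb; ring).
    assert (Ec : hc * a' + hd * c' = c * (a' * d' - b' * c')) by (unfold hc, hd; ring).
    assert (Ed : hc * b' + hd * d' = d * (a' * d' - b' * c')) by (unfold hc, hd; ring).
    rewrite Hd' in Ea, Eb, Ec, Ed. replace hb with 0 in Ea, Eb by lra.
    replace hd with ha in Ec, Ed by lra. rewrite Hc in Ec, Ed. repeat split; lra.
Qed.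

Definition farey_edge (e : region) (p1 q1 p2 q2 : Z) :=
  (p1 * q2 - q1 * p2 = 1)%Z /\ forall p, e p <-> qzero (farey_form p1 q1 p2 q2) p.

Lemma is_edge_farey_edge e : is_edge e -> exists p1 q1 p2 q2, farey_edge e p1 q1 p2 q2.
Proof.
  intros [w Hw].
  assert (exists s, (s = side1 \/ s = side2 \/ s = side3) /\ e = img (word_act w) s) as [s [Hs ->]]
    by (destruct Hw as [Hx|[Hx|Hx]]; eexists; split; [left | exact Hx | right; left | exact Hx
                                                      | right; right | exact Hx]; reflexivity).
  destruct (word_side_farey w s Hs) as [p1 [q1 [p2 [q2 [[Hd|Hd] He]]]]].
  - exists p1, q1, p2, q2. split; assumption.
  - exists p2, q2, p1, q1. split; [lia|]. intro p. rewrite He. unfold qzero.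
    rewrite qvalp_farey_form_swap. reflexivity.
Qed.

Lemma region_ext (e f : region) : (forall p, e p <-> f p) -> e = f.
Proof.
  intros H. apply functional_extensionality. intro p. apply propositional_extensionality, H.
Qed.

Lemma farey_edge_sign_eq e f p1 q1 p2 q2 p1' q1' p2' q2' s :
  farey_edge e p1 q1 p2 q2 -> farey_edge f p1' q1' p2' q2' -> s * s = 1 ->
  IZR p1 = s * IZR p1' -> IZR p2 = s * IZR p2' -> IZR q1 = s * IZR q1' -> IZR q2 = s * IZR q2' ->
  e = f.
Proof.
  intros [_ He] [_ Hf] Hs E1 E2 E3 E4. apply region_ext. intro p. rewrite He, Hf. unfold qzero.
  rewrite !qvalp_farey_form, E1, E2, E3, E4.
  replace (s * IZR q1' * fst p - s * IZR p1') with (s * (IZR q1' * fst p - IZR p1')) by ring.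
  replace (s * IZR q2' * fst p - s * IZR p2') with (s * (IZR q2' * fst p - IZR p2')) by ring.
  replace (s * (IZR q1' * fst p - IZR p1') * (s * (IZR q2' * fst p - IZR p2'))
           + s * IZR q1' * (s * IZR q2') * (snd p * snd p))
    with ((s * s) * ((IZR q1' * fst p - IZR p1') * (IZR q2' * fst p - IZR p2')
                     + IZR q1' * IZR q2' * (snd p * snd p))) by ring.
  rewrite Hs, Rmult_1_l. reflexivity.
Qed.

Definition edge_signature (A1 B1 C1 A2 B2 C2 : Z) (e : region) (sig : (Z * Z * Z) * (Z * Z * Z)) :=
  exists p1 q1 p2 q2, farey_edge e p1 q1 p2 q2 /\
    sig = (basis_coeffs A1 B1 C1 p1 q1 p2 q2, basis_coeffs A2 B2 C2 p1 q1 p2 q2).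

Lemma edge_signature_injective gam1 gam2 A1 B1 C1 A2 B2 C2 e f sig :
  irrational_form gam1 A1 B1 C1 -> irrational_form gam2 A2 B2 C2 -> gam1 <> gam2 ->
  edge_signature A1 B1 C1 A2 B2 C2 e sig -> edge_signature A1 B1 C1 A2 B2 C2 f sig -> e = f.
Proof.
  intros I1 I2 Hne [p1 [q1 [p2 [q2 [He ->]]]]] [p1' [q1' [p2' [q2' [Hf Hsig]]]]].
  unfold basis_coeffs in Hsig. injection Hsig as F1 F2 F3 F4 F5 F6.
  assert (Hdet : forall p1 q1 p2 q2 e, farey_edge e p1 q1 p2 q2 ->
            IZR p1 * IZR q2 - IZR p2 * IZR q1 = 1).
  { intros a b c d g [Hd _]. rewrite <- !mult_IZR, <- minus_IZR.
    replace (a * d - c * b)%Z with 1%Z by lia. reflexivity. }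
  assert (E : forall A B C, qbinZ A B C p1 q1 = qbinZ A B C p1' q1' ->
                qmidZ A B C p1 q1 p2 q2 = qmidZ A B C p1' q1' p2' q2' ->
                qbinZ A B C p2 q2 = qbinZ A B C p2' q2' ->
                qsubst (qformZ A B C) (IZR p1) (IZR p2) (IZR q1) (IZR q2)
                = qsubst (qformZ A B C) (IZR p1') (IZR p2') (IZR q1') (IZR q2'))
    by (intros A B C Ha Hb Hc; rewrite !qsubst_qformZ, Ha, Hb, Hc; reflexivity).
  destruct (qsubst_eq_qzero_eq_or_sign (qformZ A1 B1 C1) (qformZ A2 B2 C2) _ _ _ _ _ _ _ _
              (irrational_form_qdisc_pos _ _ _ _ I1) (irrational_form_qdisc_pos _ _ _ _ I2)
              (Hdet _ _ _ _ _ He) (Hdet _ _ _ _ _ Hf) (E _ _ _ F1 F2 F3) (E _ _ _ F4 F5 F6))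
    as [Hgs|[s [Hs [Ea [Eb [Ec Ed]]]]]].
  - exfalso. apply Hne, region_ext. intro p. rewrite (proj1 I1), (proj1 I2). apply Hgs.
  - exact (farey_edge_sign_eq e f _ _ _ _ _ _ _ _ s He Hf Hs Ea Eb Ec Ed).
Qed.

Definition Zrange (N : Z) : list Z := map (fun k => (Z.of_nat k - N)%Z) (seq 0 (Z.to_nat (2 * N + 1))).

Lemma in_Zrange N z : (- N <= z <= N)%Z -> In z (Zrange N).
Proof.
  intros H. apply in_map_iff. exists (Z.to_nat (z + N)). split.
  - rewrite Z2Nat.id; lia.
  - apply in_seq. lia.
Qed.

Definition coeff_box (N : Z) : list (Z * Z * Z) :=
  list_prod (list_prod (Zrange N) (Zrange N)) (Zrange N).
Definition signature_box (N : Z) := list_prod (coeff_box N) (coeff_box N).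

Lemma basis_coeffs_in_coeff_box gam A B C w1 w2 e p1 q1 p2 q2 N :
  irrational_form gam A B C -> (qdiscZ A B C <= N)%Z -> farey_edge e p1 q1 p2 q2 ->
  meets e (hseg (tile_center w1) (tile_center w2)) ->
  meets gam (tile w1) -> meets gam (tile w2) ->
  In (basis_coeffs A B C p1 q1 p2 q2) (coeff_box N).
Proof.
  intros Hirr HN [Hd He] Hcross M1 M2.
  assert (Hu : unimodular p1 q1 p2 q2) by (left; exact Hd).
  pose proof (crossed_edge_sign_change gam A B C w1 w2 e p1 q1 p2 q2 Hirr Hu He Hcross M1 M2) as Hs.
  pose proof (qdiscZ_basis_coeffs A B C p1 q1 p2 q2) as Hdisc. rewrite Hd in Hdisc.
  destruct (indefinite_coeff_bound (qbinZ A B C p1 q1) (qmidZ A B C p1 q1 p2 q2) (qbinZ A B C p2 q2) N)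
    as [Ha [Hb Hc]]; [lia | exact Hs |].
  unfold basis_coeffs, coeff_box. repeat (apply in_prod; [|apply in_Zrange; assumption]).
  apply in_Zrange; assumption.
Qed.

Lemma pigeonhole_rel {X Y : Type} (Rl : X -> Y -> Prop) (box : list Y) (l : list X) :
  NoDup l -> (forall x, In x l -> exists y, In y box /\ Rl x y) ->
  (forall x x' y, In x l -> In x' l -> Rl x y -> Rl x' y -> x = x') -> (length l <= length box)%nat.
Proof.
  intros Hnd Hex Hinj.
  assert (Himg : exists ly, length ly = length l /\ incl ly box /\ NoDup ly /\
                            forall y, In y ly -> exists x, In x l /\ Rl x y).
  { induction l as [|x l IH].
    - exists nil. repeat split; [intros y [] | constructor | intros y []].
    - inversion Hnd as [|x0 l0 Hnx Hnd']; subst.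
      destruct IH as [ly [H1 [H2 [H3 H4]]]]; auto.
      + intros z Hz. apply Hex. right; exact Hz.
      + intros z z' y Hz Hz'. apply Hinj; right; assumption.
      + destruct (Hex x (or_introl eq_refl)) as [y [Hy Hr]].
        exists (y :: ly). split; [simpl; lia|]. split; [intros u [<-|Hu]; auto|]. split.
        * constructor; [|exact H3]. intros Hin. destruct (H4 y Hin) as [x' [Hx' Hr']].
          assert (x = x') by (apply (Hinj x x' y); simpl; auto). subst x'. contradiction.
        * intros u [<-|Hu]; [exists x; simpl; auto|].
          destruct (H4 u Hu) as [x' [Hx' Hr']]. exists x'. simpl; auto. }
  destruct Himg as [ly [H1 [H2 [H3 _]]]].
  rewrite <- H1. apply NoDup_incl_length; assumption.
Qed.

Theorem mainTheorem12 :
  forall Gam : region -> Prop, modular_pattern Gam ->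
  exists m : nat, forall w1 w2 : list refl_gen,
    comb_dist_ge w1 w2 m ->
    forall gam1 gam2, Gam gam1 -> Gam gam2 ->
      meets gam1 (tile w1) -> meets gam1 (tile w2) ->
      meets gam2 (tile w1) -> meets gam2 (tile w2) ->
      gam1 = gam2.
Proof.
  intros Gam Hpat. destruct (pattern_disc_bound Gam Hpat) as [N HN].
  exists (S (length (signature_box N))).
  intros w1 w2 [l [Hlen [Hnd Hall]]] gam1 gam2 Hg1 Hg2 M11 M12 M21 M22.
  destruct (HN gam1 Hg1) as [A1 [B1 [C1 [I1 D1]]]].
  destruct (HN gam2 Hg2) as [A2 [B2 [C2 [I2 D2]]]].
  apply NNPP; intros Hne.
  assert (Hle : (length l <= length (signature_box N))%nat).
  { apply (pigeonhole_rel (edge_signature A1 B1 C1 A2 B2 C2)); [exact Hnd | |].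
    - intros e He. rewrite Forall_forall in Hall. destruct (Hall e He) as [Hedge Hcross].
      destruct (is_edge_farey_edge e Hedge) as [p1 [q1 [p2 [q2 Hfe]]]].
      eexists. split; [apply in_prod | exists p1, q1, p2, q2; split; [exact Hfe | reflexivity]];
        eapply basis_coeffs_in_coeff_box; eassumption.
    - intros e f sig _ _. apply (edge_signature_injective gam1 gam2); assumption. }
  lia.
Qed.
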